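(* Let $C$ and $C'$ be two cycle graphs with the same degree sequence. If $e\in E(C)\cap E(C')$, then there exists a u-switch sequence transforming $C$ into $C'$: 2-switches $\tau_1,\dots,\tau_k$ ($k\ge0$) such that, with $C_0=C$ and $C_i=\tau_i(C_{i-1})$, each $\tau_i$ is a u-switch over $C_{i-1}$ and $C_k=C'$.
   Context: Graphs are finite, simple, undirected, labeled with vertex set $[n]$; the degree sequence of $G$ is $(d_1,\dots,d_n)$ with $d_i$ the degree of vertex $i$. A unicyclic graph is a connected graph with exactly one cycle. For vertices $a,b,c,d$, $A=\binom{a\ b}{c\ d}$ is interchangeable in $G$ if $ab,cd\in E(G)$, $\{a,b\}\cap\{c,d\}=\varnothing$, $ac,bd\notin E(G)$; the 2-switch $\tau_A$ sends $G$ to $G-ab-cd+ac+bd$ if $A$ is interchangeable and to $G$ otherwise (trivial). A nontrivial 2-switch $\tau$ over a unicyclic $U$ is a u-switch if $\tau(U)$ is unicyclic. *)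

From mathcomp Require Import all_boot.
Set Implicit Arguments. Unset Strict Implicit. Unset Printing Implicit Defensive.

(* A graph on the labeled vertex set [n] = 'I_n is its edge set:
   a set of 2-element subsets of 'I_n. *)
Definition graph (n : nat) := {set {set 'I_n}}.

Definition simple_graph n (G : graph n) : bool := [forall e in G, #|e| == 2].

Definition adj n (G : graph n) : rel 'I_n := fun x y => [set x; y] \in G.

Definition deg n (G : graph n) (i : 'I_n) : nat := #|[set e in G | i \in e]|.
Definition deg_seq n (G : graph n) : {ffun 'I_n -> nat} := [ffun i => deg G i].

Definition connected n (G : graph n) : bool :=
  [forall x, forall y, connect (adj G) x y].

Definition is_cycle n (F : graph n) : bool :=
  [&& F != set0, simple_graph F,
      [forall x, (deg F x != 0) ==> (deg F x == 2)] &
      [forall x, forall y, ((deg F x != 0) && (deg F y != 0)) ==> connect (adj F) x y]].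

Definition cycle_graph n (G : graph n) : bool :=
  [&& simple_graph G, connected G & [forall x, deg G x == 2]].

Definition unicyclic n (G : graph n) : bool :=
  [&& simple_graph G, connected G &
      #|[set F : graph n | (F \subset G) && is_cycle F]| == 1].

(* A 2-switch A = (a b ; c d) is a 4-tuple of vertices. *)
Definition switch n := ('I_n * 'I_n * 'I_n * 'I_n)%type.

Definition interchangeable n (G : graph n) (A : switch n) : bool :=
  let: (a, b, c, d) := A in
  [&& [set a; b] \in G, [set c; d] \in G,
      [disjoint [set a; b] & [set c; d]],
      [set a; c] \notin G & [set b; d] \notin G].

Definition tau n (A : switch n) (G : graph n) : graph n :=
  let: (a, b, c, d) := A in
  if interchangeable G A then
    ((G :\ [set a; b]) :\ [set c; d]) :|: [set [set a; c]; [set b; d]]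
  else G.

Definition u_switch n (U : graph n) (A : switch n) : Prop :=
  tau A U != U /\ unicyclic (tau A U).

Fixpoint u_switch_seq n (G : graph n) (s : seq (switch n)) (G' : graph n) : Prop :=
  match s with
  | [::] => G = G'
  | A :: s' => u_switch G A /\ u_switch_seq (tau A G) s' G'
  end.

From mathcomp Require Import all_boot.
Set Implicit Arguments. Unset Strict Implicit. Unset Printing Implicit Defensive.

(* A nonempty cycle graph is [cycle_edges s] for an enumeration [s] of all vertices: the second
   neighbour of the end of a longest path lies on the path, closing a cycle, and a cycle inside a
   connected 2-regular graph is the whole graph.  Rotating and reversing, C and C' are
   [cycle_edges (a :: b :: r)] and [cycle_edges (a :: b :: r')] for the common edge {a, b}.
   When two enumerations agree on a prefix P of length at least 2, and the next vertex y of the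
   target occurs at P ++ x :: D ++ y :: Q in the current one, reversing the segment x ... y is
   a 2-switch: it trades the edges {p, x} and {y, y'} for {p, y} and {x, y'}, where p and y'
   are the neighbours of x and y outside the segment.  The result is again a cycle graph, hence
   unicyclic, and the common prefix grows by y. *)

Section CycleEdges.
Variable n : nat.
Implicit Types (G F R : graph n) (x y z u v w a b c d : 'I_n) (s t r : seq 'I_n).

Fixpoint path_edges x s : graph n :=
  if s is y :: s' then [set x; y] |: path_edges y s' else set0.

Definition cycle_edges s : graph n :=
  if s is x :: s' then [set last x s'; x] |: path_edges x s' else set0.

Lemma cycle_edges_cons x s : cycle_edges (x :: s) = [set last x s; x] |: path_edges x s.
Proof. by []. Qed.

Lemma cycle_edges_neq0 s : s != [::] -> cycle_edges s != set0.
Proof. by case: s => // x s _; apply/set0Pn; exists [set last x s; x]; apply: setU11. Qed.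

Lemma path_edges_cat x s t :
  path_edges x (s ++ t) = path_edges x s :|: path_edges (last x s) t.
Proof. by elim: s x => [|y s IHs] x /=; rewrite ?set0U // IHs setUA. Qed.

Lemma path_edges_rcons_rev x s y :
  path_edges x (rcons s y) = path_edges y (rcons (rev s) x).
Proof.
elim: s x => [|u s IHs] x /=; first by rewrite [[set x; y]]setUC.
rewrite IHs rev_cons -!cats1 !path_edges_cat /= last_cat /= !setU0.
by rewrite [RHS]setUC [[set u; x]]setUC.
Qed.

Lemma mem_path_edges x s e v : e \in path_edges x s -> v \in e -> v \in x :: s.
Proof.
elim: s x => [|y s IHs] x /=; first by rewrite inE.
case/setU1P => [-> | /IHs he /he vys]; last by rewrite inE vys orbT.
by rewrite !inE => /orP[] ->; rewrite ?orbT.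
Qed.

Lemma path_edges_subset G x s : (path_edges x s \subset G) = path (adj G) x s.
Proof. by elim: s x => [|y s IHs] x /=; rewrite ?sub0set // subUset sub1set IHs. Qed.

Lemma cycle_edges_cat x s z t :
  cycle_edges (x :: s ++ z :: t) =
  [set [set last z t; x]; [set last x s; z]] :|: (path_edges x s :|: path_edges z t).
Proof. by rewrite /= path_edges_cat last_cat /= -setUA [path_edges x s :|: _]setUCA. Qed.

Lemma cycle_edges_catC s t : cycle_edges (s ++ t) = cycle_edges (t ++ s).
Proof.
case: s => [|x s]; first by rewrite cats0.
case: t => [|z t]; first by rewrite cats0.
by rewrite !cycle_edges_cat [path_edges z t :|: _]setUC [[set _; _]]setUC.
Qed.

Lemma cycle_edges_rot i s : cycle_edges (rot i s) = cycle_edges s.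
Proof. by rewrite /rot cycle_edges_catC cat_take_drop. Qed.

Lemma cycle_edges_rev s : cycle_edges (rev s) = cycle_edges s.
Proof.
case: s => [|x s] //; case/lastP: s => [|s y] //.
rewrite rev_cons rev_rcons rcons_cons /= !last_rcons -path_edges_rcons_rev.
by rewrite [[set x; y]]setUC.
Qed.

Lemma mem_cycle_edges s e v : e \in cycle_edges s -> v \in e -> v \in s.
Proof.
case: s => [|x s] /=; first by rewrite inE.
case/setU1P => [-> /set2P[] -> | /mem_path_edges ev /ev //]; first exact: mem_last.
exact: mem_head.
Qed.

Lemma last_neq_head x s : uniq (x :: s) -> s != [::] -> last x s != x.
Proof. by case: s => [|y s] //= /andP[xs _] _; apply: contraNneq xs => <-; apply: mem_last. Qed.

Lemma path_edges_card2 x s e : uniq (x :: s) -> e \in path_edges x s -> #|e| == 2.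
Proof.
elim: s x => [|y s IHs] x /=; first by rewrite inE.
case/andP=> xys ys; case/setU1P => [-> | /IHs-> //].
suff xy : x != y by rewrite cards2 xy.
by apply: contraNneq xys => ->; apply: mem_head.
Qed.

Lemma cycle_edges_simple s : uniq s -> 1 < size s -> simple_graph (cycle_edges s).
Proof.
case: s => [|x s] // us ss; apply/forallP => e; apply/implyP.
case/setU1P => [-> | /(path_edges_card2 us) //].
by rewrite cards2 last_neq_head // -size_eq0 -lt0n.
Qed.

Lemma deg_cycle_edges s v : uniq s -> 2 < size s -> v \in s -> deg (cycle_edges s) v = 2.
Proof.
move=> us ss /rot_to[i t rot_s]; rewrite -(cycle_edges_rot i) rot_s.
have uvt : uniq (v :: t) by rewrite -rot_s rot_uniq.
have : 2 < size (v :: t) by rewrite -rot_s size_rot.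
case: t {rot_s} uvt => [|u t] //; rewrite cons_uniq => /andP[vut ut].
rewrite ltnS ltnS lt0n size_eq0 => tn; rewrite /deg /=.
have -> : [set e in cycle_edges [:: v, u & t] | v \in e] = [set [set last u t; v]; [set v; u]].
  apply/setP => e; rewrite !inE.
  have [-> | _] := eqVneq e [set last u t; v]; first by rewrite !inE eqxx orbT.
  have [-> | _] := eqVneq e [set v; u]; first by rewrite !inE eqxx.
  by apply/negP => /andP[/mem_path_edges uev /uev]; apply/negP.
suff vw : [set last u t; v] != [set v; u] by rewrite cards2 vw.
apply/negP => /eqP/setP/(_ (last u t)); rewrite !inE eqxx => /esym/orP[]/eqP wE.
  by case/negP: vut; rewrite -wE mem_last.
by case/negP: (last_neq_head ut tn); rewrite wE.
Qed.

Lemma adj_sym G : symmetric (adj G).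
Proof. by move=> x y; rewrite /adj setUC. Qed.

Lemma simple_graph_edge G e : simple_graph G -> e \in G -> exists u v, u != v /\ e = [set u; v].
Proof. by move=> /forallP/(_ e)/implyP sG /sG/cards2P. Qed.

Lemma deg_neq0P G v : reflect (exists2 e, e \in G & v \in e) (deg G v != 0).
Proof.
rewrite /deg -lt0n card_gt0; apply: (iffP (set0Pn _)) => -[e].
  by rewrite inE => /andP[]; exists e.
by exists e; rewrite inE; apply/andP.
Qed.

Lemma cycle_edges_connected s : (forall v, v \in s) -> connected (cycle_edges s).
Proof.
case: s => [|x s] fs; first by apply/forallP => v; have := fs v.
have xs : path (adj (cycle_edges (x :: s))) x s by rewrite -path_edges_subset subsetUr.
apply/forallP => u; apply/forallP => v; apply: connect_trans (path_connect xs (fs v)).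
by rewrite (sym_connect_sym (adj_sym _)) (path_connect xs (fs u)).
Qed.

Lemma cycle_edges_cycle_graph s :
  uniq s -> 2 < size s -> (forall v, v \in s) -> cycle_graph (cycle_edges s).
Proof.
move=> us ss fs; apply/and3P; split; first exact: cycle_edges_simple (ltnW ss).
  exact: cycle_edges_connected.
by apply/forallP => v; rewrite deg_cycle_edges.
Qed.

Lemma cycle_graph_subgraph_eq G F :
  cycle_graph G -> F \subset G -> F != set0 ->
  (forall v, deg F v != 0 -> deg F v = 2) -> F = G.
Proof.
case/and3P => sG cG /forallP dG sFG nF dF.
have edgesF v : deg F v != 0 -> [set e in F | v \in e] = [set e in G | v \in e].
  move=> Fv; apply/eqP; rewrite eqEcard -/(deg F v) -/(deg G v) (eqP (dG v)) dF // leqnn andbT.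
  by apply/subsetP => e; rewrite !inE => /andP[/(subsetP sFG) -> ->].
have inF v e : deg F v != 0 -> e \in G -> v \in e -> e \in F.
  move=> Fv eG ve; have : e \in [set e in G | v \in e] by rewrite inE eG.
  by rewrite -edgesF // inE => /andP[].
have closedF : closed (adj G) [pred v | deg F v != 0].
  suff Fadj x y : adj G x y -> deg F x != 0 -> deg F y != 0.
    by move=> x y xy; rewrite !inE; apply/idP/idP; apply: Fadj; rewrite // adj_sym.
  move=> xy Fx; apply/deg_neq0P; exists [set x; y]; last by rewrite !inE eqxx orbT.
  by apply: inF Fx xy _; rewrite !inE eqxx.
have coverF v : deg F v != 0.
  have [f fF] := set0Pn _ nF.
  have [a [b [_ fE]]] := simple_graph_edge sG (subsetP sFG f fF).
  have Fa : deg F a != 0 by apply/deg_neq0P; exists f; rewrite // fE !inE eqxx.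
  by have := closed_connect closedF (forallP (forallP cG a) v); rewrite !inE Fa.
apply/eqP; rewrite eqEsubset sFG; apply/subsetP => e eG.
have [u [w [_ eE]]] := simple_graph_edge sG eG.
by apply: inF (coverF u) eG _; rewrite eE !inE eqxx.
Qed.

Lemma cycle_graph_unicyclic G : cycle_graph G -> G != set0 -> unicyclic G.
Proof.
move=> cgG nG; have /and3P[sG cG dG] := cgG.
apply/and3P; split => //; apply/eqP; rewrite -(cards1 G); apply: eq_card => F.
rewrite !inE; apply/andP/eqP => [[sFG /and4P[nF _ dF _]] | ->].
  by apply: cycle_graph_subgraph_eq => // v Fv; apply/eqP/(implyP (forallP dF v)).
split; first exact: subxx.
apply/and4P; split => //; first by apply/forallP => x; rewrite (eqP (forallP dG x)).
by apply/forallP => x; apply/forallP => y; apply/implyP => _; apply: (forallP (forallP cG x)).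
Qed.

Lemma adj_neq G x y : simple_graph G -> adj G x y -> x != y.
Proof. by move=> /forallP/(_ [set x; y])/implyP sG /sG; rewrite cards2; case: (x != y). Qed.

Lemma cycle_graph_other_neighbor G x y :
  cycle_graph G -> adj G x y -> exists2 w, adj G x w & w != y.
Proof.
case/and3P => sG _ /forallP/(_ x)/eqP dGx xy.
have : ~~ ([set e in G | x \in e] \subset [set [set x; y]]).
  by apply/negP => /subset_leq_card; rewrite cards1 -/(deg G x) dGx.
case/subsetPn => e; rewrite !inE => /andP[eG xe] exy.
have [u [v [_ eE]]] := simple_graph_edge sG eG.
move: xe exy; rewrite eE => /set2P[] -> exy.
  by exists v; [rewrite /adj -eE | apply: contraNneq exy => ->].
by exists u; [rewrite /adj setUC -eE | apply: contraNneq exy => ->; rewrite setUC].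
Qed.

Lemma cycle_graph_has_cycle G :
  cycle_graph G -> G != set0 -> exists s, [/\ uniq s, 2 < size s & cycle_edges s \subset G].
Proof.
move=> cgG /set0Pn[e eG]; have /and3P[sG _ _] := cgG.
have [a [b [ab eE]]] := simple_graph_edge sG eG.
pose P k := [exists x, exists t : k.-tuple 'I_n, uniq (x :: t) && path (adj G) x t].
have P1 : P 1.
  by apply/existsP; exists a; apply/existsP; exists [tuple b]; rewrite /= mem_seq1 ab /adj -eE eG.
have Pn k : P k -> k <= n.
  case/existsP => x /existsP[t /andP[/andP[_ ut] _]].
  by have := max_card (mem t); rewrite (card_uniqP ut) size_tuple card_ord.
case: (ex_maxnP (ex_intro _ 1 P1) Pn) => K /existsP[x /existsP[[t /= /eqP tK]]].
rewrite -cons_uniq => /andP[ut xt] maxK.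
have longest z s : uniq (z :: s) -> path (adj G) z s -> size s <= K.
  move=> us zs; apply: maxK; apply/existsP; exists z.
  by apply/existsP; exists (in_tuple s); rewrite us.
case: t tK ut xt => [|y s] tK; first by have := maxK 1 P1; rewrite -tK.
move=> ut /[dup] xt /andP[xy _].
have [w xw wy] := cycle_graph_other_neighbor cgG xy.
have ws : w \in s.
  have : w \in [:: x, y & s].
    apply: contraT => wxys; suff : size [:: x, y & s] <= K by rewrite -tK ltnn.
    apply: (longest w); first by rewrite cons_uniq wxys.
    by apply/andP; rewrite adj_sym.
  by rewrite !inE [w == x]eq_sym (negbTE (adj_neq sG xw)) (negbTE wy).
case/splitPr: ws ut xt => s1 s2.
rewrite -cat_rcons -!cat_cons cat_uniq cat_path => /andP[ut _] /andP[xt _].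
exists [:: x, y & rcons s1 w]; split => //; first by rewrite /= size_rcons.
rewrite cycle_edges_cons last_cons last_rcons subUset sub1set path_edges_subset xt.
by rewrite -/(adj G w x) adj_sym xw.
Qed.

Lemma cycle_graph_cycle_edges G :
  cycle_graph G -> G != set0 -> exists s, [/\ uniq s, forall v, v \in s & G = cycle_edges s].
Proof.
move=> cgG nG; have [s [us ss sG]] := cycle_graph_has_cycle cgG nG.
have Gs : cycle_edges s = G.
  apply: cycle_graph_subgraph_eq => //.
    by rewrite cycle_edges_neq0 // -size_eq0 -lt0n (ltnW (ltnW ss)).
  by move=> v /deg_neq0P[e es ve]; apply: deg_cycle_edges (mem_cycle_edges es ve).
exists s; split => // v; have /and3P[_ _ /forallP/(_ v)/eqP dGv] := cgG.
have : deg G v != 0 by rewrite dGv.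
by rewrite -Gs => /deg_neq0P[e es /(mem_cycle_edges es)].
Qed.

Lemma set2_inj a b u w :
  a != b -> [set a; b] = [set u; w] -> (a = u /\ b = w) \/ (a = w /\ b = u).
Proof.
move=> ab abE; have /set2P[] : a \in [set u; w] by rewrite -abE set21.
all: have /set2P[] : b \in [set u; w] by rewrite -abE set22.
all: move=> eb ea; subst a b; rewrite ?eqxx in ab; first [by left | by right].
Qed.

Lemma path_edges_split x s e :
  e \in path_edges x s -> exists s1 u w s2, x :: s = s1 ++ [:: u, w & s2] /\ e = [set u; w].
Proof.
elim: s x => [|y s IHs] x /=; first by rewrite inE.
case/setU1P => [-> | /IHs[s1 [u [w [s2 [-> ->]]]]]]; first by exists [::], x, y, s.
by exists (x :: s1), u, w, s2.
Qed.

Lemma cycle_edges_orient s a b :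
  a != b -> [set a; b] \in cycle_edges s ->
  exists r, perm_eq [:: a, b & r] s /\ cycle_edges [:: a, b & r] = cycle_edges s.
Proof.
move=> ab abs.
suff [i [u [w [r [rot_s abE]]]]] :
    exists i u w r, rot i s = [:: u, w & r] /\ [set a; b] = [set u; w].
  case: (set2_inj ab abE) => -[-> ->].
    by exists r; rewrite -rot_s perm_rot cycle_edges_rot.
  exists (rev r).
  have -> : [:: w, u & rev r] = rot (size (rev r)) (rev (rot i s)).
    by rewrite rot_s rev_cons rev_cons -!cats1 -catA rot_size_cat.
  by rewrite perm_rot perm_rev perm_rot cycle_edges_rot cycle_edges_rev cycle_edges_rot.
case: s abs => [|x s]; first by rewrite inE.
case/setU1P => [abE | /path_edges_split[s1 [u [w [s2 [xsE ->]]]]]]; last first.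
  by exists (size s1), u, w, (s2 ++ s1); rewrite xsE rot_size_cat.
case/lastP: s abE => [abE | m l].
  by case: (set2_inj ab abE) => -[ea eb]; move: ab; rewrite ea eb eqxx.
rewrite last_rcons => abE; exists (size (x :: m)), l, x, m; split => //.
by rewrite -cats1 -cat_cons rot_size_cat.
Qed.

Lemma tau_neq G A : interchangeable G A -> tau A G != G.
Proof.
case: A => [[[a b] c] d] I; have /and5P[_ _ _ acG _] := I.
by apply: contraNneq acG => <-; rewrite /tau I !inE eqxx /= orbT.
Qed.

Lemma disjoint_set2 a b c d :
  a != c -> a != d -> b != c -> b != d -> [disjoint [set a; b] & [set c; d]].
Proof.
move=> ac ad bc bd; rewrite -setI_eq0; apply/eqP/setP => v; rewrite !inE.
by apply/negP => /andP[/orP[]/eqP-> /orP[]/eqP E]; rewrite E eqxx in ac ad bc bd.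
Qed.

Lemma interchangeable_setU2 R a b c d :
  [disjoint [set a; b] & [set c; d]] -> [set a; c] \notin R -> [set b; d] \notin R ->
  interchangeable ([set [set a; b]; [set c; d]] :|: R) (a, b, c, d).
Proof.
move=> abcd acR bdR.
have ab_cd v : v \in [set a; b] -> v \notin [set c; d] by move/(disjointFr abcd)->.
have cd_ab v : v \in [set c; d] -> v \notin [set a; b] by move/(disjointFl abcd)->.
have neq (e f : {set 'I_n}) v : v \in e -> v \notin f -> e != f.
  by move=> ve; apply: contraNneq => <-.
have ac_ab : [set a; c] != [set a; b] := neq _ _ c (set22 a c) (cd_ab c (set21 c d)).
have ac_cd : [set a; c] != [set c; d] := neq _ _ a (set21 a c) (ab_cd a (set21 a b)).
have bd_ab : [set b; d] != [set a; b] := neq _ _ d (set22 b d) (cd_ab d (set22 c d)).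
have bd_cd : [set b; d] != [set c; d] := neq _ _ b (set21 b d) (ab_cd b (set22 a b)).
apply/and5P; split => //; rewrite !inE ?eqxx ?orbT //.
  by rewrite !negb_or ac_ab ac_cd acR.
by rewrite !negb_or bd_ab bd_cd bdR.
Qed.

Lemma tau_setU2 R a b c d :
  [disjoint [set a; b] & [set c; d]] -> [set a; b] \notin R -> [set c; d] \notin R ->
  [set a; c] \notin R -> [set b; d] \notin R ->
  tau (a, b, c, d) ([set [set a; b]; [set c; d]] :|: R) = [set [set a; c]; [set b; d]] :|: R.
Proof.
move=> abcd abR cdR acR bdR; rewrite /tau interchangeable_setU2 //.
have ab_cd : [set a; b] != [set c; d].
  by apply: contraFneq (disjointFr abcd (set21 a b)) => <-; apply: set21.
rewrite -setUA setU1K; last by rewrite in_setU1 negb_or ab_cd.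
by rewrite setU1K // setUC.
Qed.

Lemma tau_cycle_edges_rev x D y z t :
  uniq ((x :: rcons D y) ++ z :: t) -> t != [::] ->
  let A := (last z t, x, y, z) in
  interchangeable (cycle_edges ((x :: rcons D y) ++ z :: t)) A /\
  tau A (cycle_edges ((x :: rcons D y) ++ z :: t)) = cycle_edges (rev (x :: rcons D y) ++ z :: t).
Proof.
rewrite cat_uniq => /and3P[uS /hasPn ST uT] tn A.
set w := last z t; set R := path_edges x (rcons D y) :|: path_edges z t.
have cross u v : u \in x :: rcons D y -> v \in z :: t -> (u != v) && ([set u; v] \notin R).
  move=> uS' vT; rewrite in_setU negb_or; apply/and3P; split.
  - by apply: contraNneq (ST v vT) => <-.
  - by apply/negP => /mem_path_edges/(_ (set22 u v)); apply/negP; apply: ST.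
  - by apply/negP => /mem_path_edges/(_ (set21 u v)) /ST; rewrite uS'.
have xS : x \in x :: rcons D y := mem_head _ _.
have yS : y \in x :: rcons D y by rewrite inE mem_rcons mem_head orbT.
have /andP[xw xwR] := cross x w xS (mem_last z t).
have /andP[yw ywR] := cross y w yS (mem_last z t).
have /andP[xz xzR] := cross x z xS (mem_head z t).
have /andP[_ yzR] := cross y z yS (mem_head z t).
have xy : x != y by apply: contraTneq uS => ->; rewrite cons_uniq mem_rcons mem_head.
have wz : w != z := last_neq_head uT tn.
have dj : [disjoint [set w; x] & [set y; z]] by rewrite disjoint_set2 // eq_sym.
rewrite rev_cons rev_rcons rcons_cons !cycle_edges_cat !last_rcons -path_edges_rcons_rev -/R.
rewrite setUC in xwR; rewrite setUC in ywR.
by split; [apply: interchangeable_setU2 | apply: tau_setU2].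
Qed.

Lemma u_switch_rev_segment P S Q :
  1 < size S -> 1 < size (P ++ Q) -> uniq (P ++ S ++ Q) -> (forall v, v \in P ++ S ++ Q) ->
  exists A, u_switch (cycle_edges (P ++ S ++ Q)) A /\
            tau A (cycle_edges (P ++ S ++ Q)) = cycle_edges (P ++ rev S ++ Q).
Proof.
move=> sS sPQ uPSQ fPSQ.
have rotE S' : cycle_edges (P ++ S' ++ Q) = cycle_edges (S' ++ Q ++ P).
  by rewrite cycle_edges_catC -catA.
have [x [D [y SE]]] : exists x D y, S = x :: rcons D y.
  by case: S sS {uPSQ fPSQ rotE} => [|x S] // sS; case/lastP: S sS => [|D y] // _; exists x, D, y.
have [z [t [QPE tn]]] : exists z t, Q ++ P = z :: t /\ t != [::].
  move: sPQ; rewrite size_cat addnC -size_cat.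
  by case: (Q ++ P) => [|z [|u t]] // _; exists z, (u :: t).
have uST : uniq ((x :: rcons D y) ++ z :: t) by rewrite -QPE -SE catA uniq_catC.
have [I tauE] := tau_cycle_edges_rev uST tn.
rewrite -QPE -SE -!rotE in I tauE.
have pS : perm_eq (P ++ S ++ Q) (P ++ rev S ++ Q).
  by rewrite perm_cat2l perm_cat2r perm_sym perm_rev.
exists (last z t, x, y, z); split => //; split; first exact: tau_neq.
have s2 : 2 < size (P ++ rev S ++ Q).
  by rewrite -(perm_size pS) !size_cat addnCA -size_cat (leq_add sS (ltnW sPQ)).
rewrite tauE; apply: cycle_graph_unicyclic.
  apply: cycle_edges_cycle_graph => [|//|v]; rewrite -?(perm_uniq pS) -?(perm_mem pS) //.
by rewrite cycle_edges_neq0 // -size_eq0 -lt0n (ltnW (ltnW s2)).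
Qed.

Lemma u_switch_seq_perm P p q :
  1 < size P -> uniq (P ++ p) -> (forall v, v \in P ++ p) -> perm_eq p q ->
  exists ts : seq (switch n), u_switch_seq (cycle_edges (P ++ p)) ts (cycle_edges (P ++ q)).
Proof.
elim: q P p => [|y q IHq] P p sP uPp fPp pq; first by exists [::]; rewrite (perm_nilP pq).
have sPy : 1 < size (rcons P y) by rewrite size_rcons ltnW.
have yp : y \in p by rewrite (perm_mem pq) mem_head.
case/splitPr: yp uPp fPp pq => p1 p2 uPp fPp pq.
case: p1 => [|x D] /= in uPp fPp pq *.
  by have := IHq (rcons P y) p2 sPy; rewrite !cat_rcons -(perm_cons y) => /(_ uPp fPp pq).
set S := x :: rcons D y; set T := rcons (rev D) x ++ p2.
have SE : x :: D ++ y :: p2 = S ++ p2 by rewrite /= cat_rcons.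
have revE : rev S ++ p2 = y :: T by rewrite rev_cons rev_rcons rcons_cons.
rewrite SE in uPp fPp pq *.
have sS : 1 < size S by rewrite /= size_rcons.
have sPQ : 1 < size (P ++ p2) by rewrite size_cat (leq_trans sP) ?leq_addr.
have [A [uA tauA]] := u_switch_rev_segment sS sPQ uPp fPp.
have pS : perm_eq (P ++ S ++ p2) (rcons P y ++ T).
  by rewrite cat_rcons -revE perm_cat2l perm_cat2r perm_sym perm_rev.
have uPT : uniq (rcons P y ++ T) by rewrite -(perm_uniq pS).
have fPT v : v \in rcons P y ++ T by rewrite -(perm_mem pS).
have pT : perm_eq T q by rewrite -(perm_cons y) -revE (perm_trans _ pq) // perm_cat2r perm_rev.
have [ts tsE] := IHq (rcons P y) T sPy uPT fPT pT.
by exists (A :: ts); split; rewrite // tauA revE -!cat_rcons.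
Qed.

Lemma cycle_graph_edge_enum G a b :
  cycle_graph G -> a != b -> [set a; b] \in G ->
  exists r, [/\ uniq [:: a, b & r], forall v, v \in [:: a, b & r] & G = cycle_edges [:: a, b & r]].
Proof.
move=> cgG ab abG; have nG : G != set0 by apply/set0Pn; exists [set a; b].
have [s [us fs Gs]] := cycle_graph_cycle_edges cgG nG; rewrite Gs in abG *.
have [r [ps <-]] := cycle_edges_orient ab abG.
by exists r; split => [|v|//]; rewrite ?(perm_uniq ps) ?(perm_mem ps).
Qed.

End CycleEdges.

Unset Implicit Arguments. Set Strict Implicit.

Theorem lemma3p6 (n : nat) (C C' : graph n) :
  cycle_graph C -> cycle_graph C' -> deg_seq C = deg_seq C' ->
  forall e : {set 'I_n}, e \in C -> e \in C' ->
  exists s : seq (switch n), u_switch_seq C s C'.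
Proof.
(* The degree sequences agree automatically: cycle graphs are 2-regular. *)
move=> cC cC' _ e eC eC'; have /and3P[sC _ _] := cC.
have [a [b [ab eE]]] := simple_graph_edge sC eC; rewrite eE in eC eC'.
have [r [ur fr ->]] := cycle_graph_edge_enum cC ab eC.
have [r' [ur' fr' ->]] := cycle_graph_edge_enum cC' ab eC'.
have rr' : perm_eq r r'.
  by rewrite -(perm_cons b) -(perm_cons a); apply: uniq_perm => // v; rewrite fr fr'.
exact: (u_switch_seq_perm (P := [:: a; b])).
Qed.
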